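(* Let $p$ be a prime and let $a,b\in\mathbb{C}_p$ with $a\neq0$, $b\neq0$, $a\neq b$ and $|a|_p<|b|_p$. Let $P=-\frac1b$, $D=\mathbb{C}_p\setminus\{P\}$, $f(x)=\frac{ax^2}{bx+1}$ on $D$, and $x_1=0$ (a fixed point of $f$). For $n\geq 0$ put $r_n=\frac{|b|_p^{n-1}}{|a|_p^{n}}$, and put $l_0=0$ and $l_{n+1}=\frac{|a|_p^{n}}{|b|_p^{n+1}}$ for $n\ge 0$. Then $$D\setminus\Big(\bigcup_{i=1}^{\infty}S_{r_i}(x_1)\cup\bigcup_{j=0}^{\infty}S_{l_j}(P)\Big)\subseteq A(x_1).$$
   Context: $\mathbb{C}_p$ is the field of complex $p$-adic numbers with $p$-adic norm $|\cdot|_p$. For $c\in\mathbb{C}_p$ and $r\ge 0$, $S_r(c)=\{x\in\mathbb{C}_p:|x-c|_p=r\}$. For $y\in D$ write $y^{(n)}=f^n(y)$ (the $n$-th iterate, where defined, i.e. as long as no earlier iterate equals $P$). For a fixed point $x^{(0)}$ of $f$, its basin of attraction is $A(x^{(0)})=\{y: y^{(n)}\text{ is defined for all }n\text{ and }y^{(n)}\to x^{(0)}\text{ as }n\to\infty\}$. *)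

From HB Require Import structures.
From mathcomp Require Import all_boot all_order all_algebra.
From mathcomp Require Import reals.
Set Implicit Arguments. Unset Strict Implicit. Unset Printing Implicit Defensive.
Import Order.TTheory GRing.Theory Num.Theory.
Local Open Scope ring_scope.

Definition nonarch_abs (K : fieldType) (R : realType) (nv : K -> R) : Prop :=
  [/\ (forall x, 0 <= nv x),
      (forall x, nv x = 0 <-> x = 0),
      (forall x y, nv (x * y) = nv x * nv y) &
      (forall x y, nv (x + y) <= Num.max (nv x) (nv y))].

Definition nv_complete (K : fieldType) (R : realType) (nv : K -> R) : Prop :=
  forall u : nat -> K,
    (forall e : R, 0 < e -> exists N : nat, forall m n : nat,
        (N <= m)%N -> (N <= n)%N -> nv (u m - u n) < e) ->
    exists l : K, forall e : R, 0 < e -> exists N : nat, forall n : nat,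
        (N <= n)%N -> nv (u n - l) < e.

Definition extends_padic (p : nat) (K : fieldType) (R : realType)
    (nv : K -> R) : Prop :=
  forall n : nat, (0 < n)%N -> nv (n%:R) = ((p%:R : R) ^- (logn p n)).

(* K with nv plays the role of (C_p, |.|_p) *)
Definition Cp_like (p : nat) (K : closedFieldType) (R : realType)
    (nv : K -> R) : Prop :=
  [/\ nonarch_abs nv, nv_complete nv & extends_padic p nv].

Definition fmap (K : fieldType) (a b : K) (x : K) : K := a * x ^+ 2 / (b * x + 1).
Definition pole (K : fieldType) (b : K) : K := - (1 / b).

Definition sphere (K : fieldType) (R : realType) (nv : K -> R) (c : K) (r : R)
  : K -> Prop := fun x => nv (x - c) = r.

(* radii r_n = |b|^(n-1)/|a|^n (used for n >= 1), l_0 = 0, l_(n+1) = |a|^n/|b|^(n+1) *)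
Definition rrad (R : realType) (na nb : R) (n : nat) : R := nb ^+ n.-1 / na ^+ n.
Definition lrad (R : realType) (na nb : R) (n : nat) : R :=
  match n with 0 => 0 | m.+1 => na ^+ m / nb ^+ m.+1 end.

Definition basin (K : fieldType) (R : realType) (nv : K -> R)
    (f : K -> K) (P x0 : K) : K -> Prop :=
  fun y => (forall n : nat, iter n f y <> P) /\
    (forall e : R, 0 < e -> exists N : nat, forall n : nat,
        (N <= n)%N -> nv (iter n f y - x0) < e).

(* Write q = |a|/|b| < 1 and c = 1/|b| = |P|.  By the strict triangle
   inequality |b x + 1| is 1 when |x| < c and |b x| when |x| > c, so
   |f x| <= q |x| on the open disc of radius c, which f therefore maps into
   itself and contracts to 0, while |f x| = q |x| exactly outside the closed
   disc.  An orbit starting outside hence enters the open disc unless it hits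
   the circle |x| = c, i.e. unless |x| = c / q^i = r_i.  On that circle
   |f x| |x - P| = q c^2, so f x lies on a circle of radius c / q^i exactly
   when |x - P| = q^(i+1) c = l_(i+2). *)
From HB Require Import structures.
From mathcomp Require Import all_boot all_order all_algebra.
From mathcomp Require Import reals normedtype sequences.
From mathcomp Require Import zify ring.
Set Implicit Arguments. Unset Strict Implicit. Unset Printing Implicit Defensive.
Import Order.TTheory GRing.Theory Num.Theory numFieldNormedType.Exports.
Local Open Scope ring_scope.

Lemma expr_eventually_lt (R : archiRealFieldType) (q e : R) :
  0 <= q -> q < 1 -> 0 < e -> exists N, forall n, (N <= n)%N -> q ^+ n < e.
Proof.
move=> q_ge0 q_lt1 e_gt0; have : `|q| < 1 by rewrite ger0_norm.
move=> /cvg_expr/cvgr0_norm_lt/(_ e e_gt0) [N _ qN_lt].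
by exists N => n /qN_lt; rewrite ger0_norm ?exprn_ge0.
Qed.

Lemma rradE (R : realType) (na nb : R) i : nb != 0 -> (0 < i)%N ->
  rrad na nb i = nb^-1 / (na / nb) ^+ i.
Proof.
move=> nb_neq0; case: i => // i _.
by rewrite /rrad expr_div_n invf_div [nb ^+ i.+1]exprS mulrA mulKf.
Qed.

Lemma lradS (R : realType) (na nb : R) i : lrad na nb i.+1 = (na / nb) ^+ i / nb.
Proof. by rewrite /= expr_div_n exprSr invfM mulrA. Qed.

Lemma basin_iter (K : fieldType) (R : realType) (nv : K -> R) (f : K -> K)
    (P x0 x : K) m :
  (forall j, (j < m)%N -> iter j f x <> P) -> basin nv f P x0 (iter m f x) ->
  basin nv f P x0 x.
Proof.
move=> x_notP [fmx_notP fmx_cvg]; split=> [n|e e_gt0].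
  have [/x_notP //|mn] := ltnP n m.
  by rewrite -(subnK mn) iterD; apply: fmx_notP.
have [N fmx_near] := fmx_cvg e e_gt0; exists (N + m)%N => n Nmn.
have mn : (m <= n)%N by lia.
by rewrite -(subnK mn) iterD; apply: fmx_near; lia.
Qed.

Section NonArchimedean.
Variables (K : fieldType) (R : realType) (nv : K -> R).
Hypothesis nv_abs : nonarch_abs nv.

Lemma nv_ge0 x : 0 <= nv x. Proof. by case: nv_abs. Qed.
Lemma nv_eq0 x : nv x = 0 <-> x = 0. Proof. by case: nv_abs. Qed.
Lemma nvM x y : nv (x * y) = nv x * nv y. Proof. by case: nv_abs. Qed.
Lemma nvD_le_max x y : nv (x + y) <= Num.max (nv x) (nv y).
Proof. by case: nv_abs. Qed.

Lemma nv_gt0 x : x != 0 -> 0 < nv x.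
Proof.
by move=> x_neq0; rewrite lt_def nv_ge0 andbT; apply: contra_neq x_neq0 => /nv_eq0.
Qed.

Lemma nv1 : nv 1 = 1.
Proof.
have nv1_neq0 : nv 1 != 0 by rewrite gt_eqF // nv_gt0 ?oner_eq0.
by apply: (mulfI nv1_neq0); rewrite -nvM !mulr1.
Qed.

Lemma nvV x : nv x^-1 = (nv x)^-1.
Proof.
have [->|x_neq0] := eqVneq x 0; first by rewrite invr0 (proj2 (nv_eq0 0)) ?invr0.
by apply: (mulfI (lt0r_neq0 (nv_gt0 x_neq0))); rewrite -nvM !mulfV ?nv1 ?gt_eqF ?nv_gt0.
Qed.

Lemma nvN x : nv (- x) = nv x.
Proof.
have nvN1 : nv (-1) = 1.
  apply/eqP; rewrite -(@eqrXn2 _ 2) ?nv_ge0 //.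
  by rewrite expr2 -nvM mulrNN mulr1 nv1 expr1n.
by rewrite -mulN1r nvM nvN1 mul1r.
Qed.

Lemma nvDl_lt x y : nv x < nv y -> nv (x + y) = nv y.
Proof.
move=> lt_xy; apply/eqP; rewrite eq_le; apply/andP; split.
  by apply: le_trans (nvD_le_max x y) _; rewrite ge_max lexx ltW.
have := nvD_le_max (x + y) (- x); rewrite addrC addKr nvN le_max => /orP[] //.
by rewrite leNgt lt_xy.
Qed.

End NonArchimedean.

Section Dynamics.
Variables (K : fieldType) (R : realType) (nv : K -> R).
Hypothesis nv_abs : nonarch_abs nv.
Variables a b : K.
Hypotheses (a_neq0 : a != 0) (b_neq0 : b != 0) (nva_lt_nvb : nv a < nv b).

Local Notation f := (fmap a b).
Local Notation P := (pole b).
Local Notation q := (nv a / nv b).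
Local Notation c := (nv b)^-1.

Lemma nvb_neq0 : nv b != 0. Proof. by rewrite gt_eqF // nv_gt0. Qed.

Lemma c_gt0 : 0 < c. Proof. by rewrite invr_gt0 nv_gt0. Qed.

Lemma q_gt0 : 0 < q. Proof. by rewrite divr_gt0 ?nv_gt0. Qed.

Lemma q_lt1 : q < 1. Proof. by rewrite ltr_pdivrMr ?nv_gt0 // mul1r. Qed.

Lemma nv_pole : nv P = c. Proof. by rewrite /pole nvN // div1r nvV. Qed.

Lemma nv_fmap x : nv (f x) = nv a * nv x ^+ 2 / nv (b * x + 1).
Proof. by rewrite /fmap nvM // nvV // nvM // expr2 nvM. Qed.

Lemma nv_fmap_gt x : c < nv x -> nv (f x) = q * nv x.
Proof.
move=> c_lt_x; have x_gt0 : 0 < nv x := lt_trans c_gt0 c_lt_x.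
have nvbx_gt1 : 1 < nv (b * x).
  by rewrite nvM // -(mulfV nvb_neq0) ltr_pM2l ?nv_gt0.
rewrite nv_fmap addrC nvDl_lt ?nv1 // nvM //.
by field; rewrite nvb_neq0 gt_eqF.
Qed.

Lemma nv_fmap_lt x : nv x < c -> nv (f x) <= q * nv x.
Proof.
move=> x_lt_c; have nvbx_lt1 : nv (b * x) < nv 1.
  by rewrite nv1 // nvM // -(mulfV nvb_neq0) ltr_pM2l ?nv_gt0.
rewrite nv_fmap nvDl_lt // nv1 // divr1 expr2 mulrA [q * _]mulrAC.
by apply: ler_wpM2l; rewrite ?mulr_ge0 ?nv_ge0 ?ltW.
Qed.

Lemma nv_iter_lt x n : nv x < c -> nv (iter n f x) <= q ^+ n * nv x.
Proof.
move=> x_lt_c; elim: n => [|n IH]; first by rewrite mul1r.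
have qn_le1 : q ^+ n <= 1 by rewrite exprn_ile1 ?ltW ?q_gt0 ?q_lt1.
have fnx_lt_c : nv (iter n f x) < c.
  by apply: le_lt_trans IH (le_lt_trans _ x_lt_c); rewrite ler_piMl ?nv_ge0.
rewrite iterS exprS -mulrA; apply: le_trans (nv_fmap_lt fnx_lt_c) _.
by rewrite ler_pM2l ?q_gt0.
Qed.

Lemma basin_disc x : nv x < c -> basin nv f P 0 x.
Proof.
move=> x_lt_c; split=> [n fnx_eqP|e e_gt0].
  have := nv_iter_lt n x_lt_c; rewrite fnx_eqP nv_pole.
  have qn_le1 : q ^+ n <= 1 by rewrite exprn_ile1 ?ltW ?q_gt0 ?q_lt1.
  by move=> /le_trans/(_ (ler_piMl (nv_ge0 nv_abs x) qn_le1)); rewrite leNgt x_lt_c.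
have [N qN_lt] := expr_eventually_lt (ltW q_gt0) q_lt1 (mulr_gt0 e_gt0 (nv_gt0 nv_abs b_neq0)).
exists N => n Nn; rewrite subr0; apply: le_lt_trans (nv_iter_lt n x_lt_c) _.
apply: le_lt_trans (ler_wpM2l (exprn_ge0 n (ltW q_gt0)) (ltW x_lt_c)) _.
by rewrite -[X in _ < X](mulfK nvb_neq0) ltr_pM2r ?c_gt0 ?qN_lt.
Qed.

Lemma nv_iter_gt x n : (forall k, (k < n)%N -> c < q ^+ k * nv x) ->
  nv (iter n f x) = q ^+ n * nv x.
Proof.
elim: n => [|n IH] above; first by rewrite mul1r.
have IHn : nv (iter n f x) = q ^+ n * nv x by apply: IH => k /ltnW/above.
by rewrite iterS nv_fmap_gt IHn ?exprS ?mulrA // above.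
Qed.

Lemma basin_off_circles x : (forall i, nv x <> c / q ^+ i) -> basin nv f P 0 x.
Proof.
move=> x_off; have [|c_le_x] := ltP (nv x) c; first exact: basin_disc.
have x_gt0 : 0 < nv x := lt_le_trans c_gt0 c_le_x.
have ex_inside : exists n, q ^+ n * nv x < c.
  have [N qN_lt] := expr_eventually_lt (ltW q_gt0) q_lt1 (divr_gt0 c_gt0 x_gt0).
  by exists N; rewrite -ltr_pdivlMr // qN_lt.
have [n inside_n n_min] := ex_minnP ex_inside.
have above : forall k, (k < n)%N -> c < q ^+ k * nv x.
  move=> k kn; rewrite lt_neqAle; apply/andP; split.
    apply/eqP => c_eq; apply: (x_off k).
    by rewrite [c in c / _]c_eq mulrC mulKf // expf_neq0 // gt_eqF // q_gt0.
  by rewrite leNgt; apply: contraTN kn => /n_min; rewrite -leqNgt.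
apply: (basin_iter (m := n)); last by apply: basin_disc; rewrite nv_iter_gt.
move=> j jn fjx_eqP; have := above j jn.
by rewrite -nv_iter_gt => [|k kj]; [rewrite fjx_eqP nv_pole ltxx | apply/above/(ltn_trans kj)].
Qed.

Lemma nv_fmap_circle x : x != P -> nv x = c -> nv (f x) * nv (x - P) = q * c ^+ 2.
Proof.
move=> x_neqP x_on; have dist_neq0 : nv (x - P) != 0.
  by rewrite gt_eqF // nv_gt0 // subr_eq0.
rewrite nv_fmap; have -> : b * x + 1 = b * (x - P).
  by rewrite /pole opprK mulrDr div1r mulfV.
by rewrite nvM // x_on; field; rewrite dist_neq0 nvb_neq0.
Qed.

End Dynamics.

Theorem theorem3p3 (p : nat) (K : closedFieldType) (R : realType) (nv : K -> R)
  (hp : prime p) (hK : Cp_like p nv)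
  (a b : K) (ha : a != 0) (hb : b != 0) (hab : a != b) (hlt : nv a < nv b)
  (y : K)
  (hyD : y <> pole b)
  (hr : forall i : nat, (1 <= i)%N -> ~ sphere nv 0 (rrad (nv a) (nv b) i) y)
  (hl : forall j : nat, ~ sphere nv (pole b) (lrad (nv a) (nv b) j) y) :
  basin nv (fmap a b) (pole b) 0 y.
Proof.
have [nv_abs _ _] := hK.
have nva_neq0 : nv a != 0 by rewrite gt_eqF // nv_gt0.
have nvb_neq0 := nvb_neq0 nv_abs hb.
have basin_off := basin_off_circles nv_abs ha hb hlt.
have [y_on|y_off] := eqVneq (nv y) (nv b)^-1; last first.
  apply: basin_off => -[|i] y_eq; first by rewrite y_eq expr0 divr1 eqxx in y_off.
  by apply: (hr i.+1) => //; rewrite /sphere subr0 y_eq rradE.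
apply: (basin_iter (m := 1)) => [[|//] _|]; first exact: hyD.
apply: basin_off => i /= fy_eq; apply: (hl i.+2); rewrite /sphere lradS.
have y_neqP : y != pole b by apply/eqP.
have := nv_fmap_circle nv_abs a hb y_neqP y_on; rewrite fy_eq => dist_eq.
have qi_neq0 : (nv a / nv b) ^+ i != 0 by rewrite expf_neq0 // mulf_neq0 ?invr_eq0.
have factor_neq0 : (nv b)^-1 / (nv a / nv b) ^+ i != 0.
  by rewrite mulf_neq0 ?invr_eq0.
apply: (mulfI factor_neq0); rewrite dist_eq [_ ^+ i.+1]exprS.
by field; rewrite nvb_neq0 qi_neq0.
Qed.
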